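(* Let $(\mathcal A,\mathcal B)$ be a $(\theta,\theta)$ pair. Then $(\mathcal A,\mathcal B)$ is nice if and only if for every two families $X=\{x_u:u<\theta\}$ and $Y=\{y_v:v<\theta\}$, each consisting of pairwise disjoint finite subsets of $\theta$, every $X$-sequence $S$ and every $Y$-sequence $T$, the product partial order $\mathcal Q(X,S)\times\mathcal Q(Y,T)$ has the $\kappa$-chain condition (every antichain has size $<\kappa$).
   Context: Standing assumptions: $\theta$ is a singular cardinal of uncountable cofinality, $\kappa=\mathrm{cf}(\theta)$, and $\langle\theta_\alpha:\alpha<\kappa\rangle$ is a fixed increasing sequence of cardinals converging to $\theta$ with $\theta_0>\kappa$. A $(\theta,\theta)$ pair is $(\mathcal A,\mathcal B)$ with $\mathcal A=\{a_\xi:\xi<\theta\}$, $\mathcal B=\{b_\xi:\xi<\theta\}$ subsets of $\omega$ such that $a_\xi\cap b_\eta$ is finite for all $\xi,\eta<\theta$. For finite $x\subseteq\theta$, $a(x)=\bigcap_{\xi\in x}a_\xi$, $b(x)=\bigcap_{\xi\in x}b_\xi$, with $a(\emptyset)=b(\emptyset)=\omega$. The pair is nice if for every family $\{x_i:i<\theta\}$ of pairwise disjoint finite subsets of $\theta$ there are $i,j<\theta$ with $a(x_i)\cap b(x_j)\ne\emptyset$. Given a family $X=\{x_i:i<\theta\}$ of pairwise disjoint finite subsets of $\theta$, an $X$-sequence is $S=\{S_\alpha:\alpha<\kappa\}$ where the $S_\alpha$ are pairwise disjoint subsets of $\theta$, $|S_\alpha|>\theta_\alpha$, and $a(x_i)\cap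 b(x_j)=\emptyset$ for all $i,j\in S_\alpha$, for every $\alpha<\kappa$. $\mathcal Q(X,S)$ is the set of finite $F\subseteq\kappa$ such that for all distinct $\alpha,\beta\in F$ there exist $i\in S_\alpha$, $j\in S_\beta$ with $a(x_i)\cap b(x_j)\neq\emptyset$ or $b(x_i)\cap a(x_j)\ne\emptyset$; it is ordered by inclusion (two conditions are compatible iff their union is in the poset). *)

From mathcomp Require Import all_boot.
From mathcomp Require Import boolp classical_sets functions cardinality.
From Stdlib Require Import Wellfounded.

Set Implicit Arguments.
Unset Strict Implicit.
Unset Printing Implicit Defensive.

Local Open Scope classical_set_scope.
Local Open Scope card_scope.

Definition card_lt T U (A : set T) (B : set U) : Prop :=
  (A #<= B) /\ ~ (B #<= A).

(* Ordinals / cardinals, represented by well-ordered types.           *)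

Definition well_order T (lt : T -> T -> Prop) : Prop :=
  [/\ (forall x, ~ lt x x),
      (forall x y z, lt x y -> lt y z -> lt x z),
      (forall x y, lt x y \/ x = y \/ lt y x)
    & well_founded lt].

Definition seg T (lt : T -> T -> Prop) (t : T) : set T := [set s | lt s t].

Definition is_cardinal T (lt : T -> T -> Prop) : Prop :=
  forall t, card_lt (seg lt t) [set: T].

(* the ordinal below t (i.e. the ordinal t itself) is a cardinal *)
Definition is_cardinal_below T (lt : T -> T -> Prop) (t : T) : Prop :=
  forall s, lt s t -> card_lt (seg lt s) (seg lt t).

Definition cofinal T (lt : T -> T -> Prop) (A : set T) : Prop :=
  forall t, exists2 s, A s & (lt t s \/ t = s).

Definition cofinality_is T (ltT : T -> T -> Prop) K : Prop :=
  (exists A : set T, cofinal ltT A /\ A #= [set: K]) /\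
  (forall A : set T, cofinal ltT A -> [set: K] #<= A).

(* Standing assumptions: theta (= T, ltT) is a singular cardinal of uncountable
   cofinality kappa (= K, ltK), and th : K -> T is an increasing sequence of
   cardinals converging to theta with theta_0 > kappa.  The cardinal theta_alpha
   is the initial segment [seg ltT (th alpha)]. *)
Definition standing_assumptions T (ltT : T -> T -> Prop)
    K (ltK : K -> K -> Prop) (th : K -> T) : Prop :=
  well_order ltT /\ is_cardinal ltT /\
  well_order ltK /\ is_cardinal ltK /\
  cofinality_is ltT K /\
  card_lt [set: K] [set: T] /\
  ~ countable [set: K] /\
  (forall a, is_cardinal_below ltT (th a)) /\
  (forall a b, ltK a b -> ltT (th a) (th b)) /\
  (forall t, exists a, ltT t (th a)) /\
  (forall k0, (forall k, ~ ltK k k0) ->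
      card_lt [set: K] (seg ltT (th k0))).

Definition theta_pair T (a b : T -> set nat) : Prop :=
  forall xi eta, finite_set (a xi `&` b eta).

(* a(x) = intersection of the a_xi, xi in x; a(emptyset) = omega *)
Definition capf T (a : T -> set nat) (x : set T) : set nat :=
  \bigcap_(xi in x) a xi.

Definition disj_fin_family T (x : T -> set T) : Prop :=
  (forall i, finite_set (x i)) /\
  (forall i j, i <> j -> x i `&` x j = set0).

Definition nice T (a b : T -> set nat) : Prop :=
  forall x : T -> set T, disj_fin_family x ->
    exists i j, capf a (x i) `&` capf b (x j) !=set0.

Definition X_sequence T (ltT : T -> T -> Prop) K (th : K -> T)
    (a b : T -> set nat) (x : T -> set T) (S : K -> set T) : Prop :=
  [/\ (forall al be, al <> be -> S al `&` S be = set0),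
      (forall al, card_lt (seg ltT (th al)) (S al))
    & (forall al i j, S al i -> S al j ->
          capf a (x i) `&` capf b (x j) = set0)].

(* the poset Q(X,S): finite F subset of kappa, ordered by inclusion *)
Definition Qposet T K (a b : T -> set nat) (x : T -> set T) (S : K -> set T)
    (F : set K) : Prop :=
  finite_set F /\
  forall al be, F al -> F be -> al <> be ->
    exists i j, [/\ S al i, S be j &
      (capf a (x i) `&` capf b (x j) !=set0 \/
       capf b (x i) `&` capf a (x j) !=set0)].

Definition prod_poset K (P1 P2 : set K -> Prop) (p : set K * set K) : Prop :=
  P1 p.1 /\ P2 p.2.

Definition prod_le K (p q : set K * set K) : Prop :=
  p.1 `<=` q.1 /\ p.2 `<=` q.2.

Definition prod_compatible K (P1 P2 : set K -> Prop) (p q : set K * set K) :=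
  exists r, prod_poset P1 P2 r /\ prod_le p r /\ prod_le q r.

Definition prod_antichain K (P1 P2 : set K -> Prop) (A : set (set K * set K)) :=
  (forall p, A p -> prod_poset P1 P2 p) /\
  (forall p q, A p -> A q -> p <> q -> ~ prod_compatible P1 P2 p q).

Definition prod_kappa_cc K (P1 P2 : set K -> Prop) : Prop :=
  forall A, prod_antichain P1 P2 A -> card_lt A [set: K].

(* If (A, B) is not nice, some disjoint family x has every a(x_i) disjoint
   from every b(x_j); splitting theta into kappa disjoint pieces of size theta
   gives an x-sequence S for which the conditions ({alpha}, {}) form an
   antichain of size kappa.
   Conversely, code each member of an antichain of size kappa as a finite
   subset of kappa * 2.  These codes are unbounded in kappa = cf(theta), so a
   Delta-system argument yields a root R: cofinally many members agree with R
   below some level m and reach above it.  By recursion on t < theta choose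
   such a member with m above t, and for each of its coordinates alpha outside
   R a point of S_alpha whose set avoids all earlier choices; this is possible
   because |S_alpha| > theta_alpha > |t|.  Niceness of the resulting disjoint
   family gives a(Z_i) meeting b(Z_j), which makes the members chosen at i and
   j compatible, or, if they coincide, contradicts the separation within one
   S_alpha. *)

From mathcomp Require Import all_boot.
From mathcomp Require Import boolp classical_sets functions cardinality.
From Stdlib Require Import Wellfounded.

Set Implicit Arguments.
Unset Strict Implicit.
Unset Printing Implicit Defensive.

Local Open Scope classical_set_scope.
Local Open Scope card_scope.

Definition inj_le U V (A : set U) (B : set V) : Prop :=
  exists f : U -> V,
    (forall u, A u -> B (f u)) /\ (forall u u', A u -> A u' -> f u = f u' -> u = u').

Lemma choice_on U V (v0 : V) (A : set U) (R : U -> V -> Prop) :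
  (forall u, A u -> exists v, R u v) -> exists f : U -> V, forall u, A u -> R u (f u).
Proof.
move=> hR; have [f hf] : {f : U -> V & forall u, A u -> R u (f u)}.
  apply: (@choice _ _ (fun u v => A u -> R u v)) => u.
  by have [/hR [v Ruv]|nAu] := pselect (A u); [exists v | exists v0].
by exists f.
Qed.

Section InjLe.
Variables U V W : Type.
Implicit Types (A : set U) (B : set V) (C : set W).

Lemma inj_le_card_le A B : inj_le A B -> A #<= B.
Proof.
move=> [f [fAB finj]].
have [g] : $|{injfun A >-> B}|.
  apply/injfunPex; exists f; first by move=> u /= Au; apply: fAB.
  by move=> u u' /set_mem Au /set_mem Au'; exact: finj.
exact: inj_card_le.
Qed.

Lemma card_le_inj_le (v0 : V) A B : A #<= B -> inj_le A B.
Proof.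
move/card_leP => [g].
pose f u := if pselect (A u) is left h then val (g (exist _ u (mem_set h))) else v0.
exists f; split => [u Au|u u' Au Au'].
  by rewrite /f; case: pselect => // h; apply: set_mem; exact: valP (g _).
rewrite /f; case: pselect => // h; case: pselect => // h'.
by move=> /val_inj /(@inj _ _ _ g) => /(_ (mem_set I) (mem_set I)) [].
Qed.

Lemma inj_le_trans A B C : inj_le A B -> inj_le B C -> inj_le A C.
Proof.
move=> [f [fA fi]] [g [gB gi]]; exists (g \o f); split => [u Au|u u' Au Au' /=].
  exact/gB/fA.
by move/(gi _ _ (fA _ Au) (fA _ Au')); exact: fi.
Qed.

Lemma subset_inj_le (A A' : set U) : A `<=` A' -> inj_le A A'.
Proof. by move=> AA'; exists id. Qed.

End InjLe.

Lemma chain_bigcup2 T (F : set (set T)) (s t : T) : total_on F subset ->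
  (\bigcup_(r in F) r) s -> (\bigcup_(r in F) r) t -> exists2 r, F r & r s /\ r t.
Proof.
move=> Ftot [r Fr rs] [r' Fr' r't].
have [rr'|r'r] := Ftot _ _ Fr Fr'; first by exists r' => //; split => //; apply: rr'.
by exists r => //; split => //; apply: r'r.
Qed.

Lemma Zorn_bigcup_above T (P : set (set T)) (r0 : set T) : P r0 ->
  (forall F : set (set T), F !=set0 -> F `<=` P -> total_on F subset ->
     (forall r, F r -> r0 `<=` r) -> P (\bigcup_(r in F) r)) ->
  exists m, [/\ P m, r0 `<=` m & forall s, m `<` s -> ~ P s].
Proof.
move=> Pr0 Pchain.
have [|A [PA Amax]] := @Zorn_bigcup _ (fun r => P (r `|` r0)).
  move=> F FP Ftot; have [[r Fr]|F0] := pselect (F !=set0); last first.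
    rewrite (_ : F = set0) ?bigcup_set0 ?set0U //.
    by apply/seteqP; split => // X FX; apply: F0; exists X.
  suff -> : \bigcup_(X in F) X `|` r0 = \bigcup_(X in (setU^~ r0) @` F) X.
    apply: Pchain; first by exists (r `|` r0), r.
    - by move=> _ [X FX <-]; exact: FP.
    - move=> _ _ [X FX <-] [Y FY <-].
      by have [XY|YX] := Ftot _ _ FX FY; [left|right]; apply: setSU.
    - by move=> _ [X _ <-]; exact: subsetUr.
  apply/seteqP; split => [u [[X FX Xu]|r0u]|u [_ [X FX <-] [Xu|r0u]]].
  - by exists (X `|` r0); [exists X | left].
  - by exists (r `|` r0); [exists r | right].
  - by left; exists X.
  - by right.
exists (A `|` r0); split; [exact: PA | exact: subsetUr |].
move=> s [As sA] Ps; have r0s : r0 `<=` s by apply: subset_trans As; exact: subsetUr.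
apply: (Amax s); last by move: r0s => /setUidPl ->.
split; first by apply: subset_trans As; exact: subsetUl.
by move=> sA'; apply: sA => u /sA'; left.
Qed.

Lemma inj_le_total U V (u0 : U) (v0 : V) (A : set U) (B : set V) :
  inj_le A B \/ inj_le B A.
Proof.
pose P (r : set (U * V)) := [/\ r `<=` A `*` B,
  forall u v v', r (u, v) -> r (u, v') -> v = v' &
  forall u u' v, r (u, v) -> r (u', v) -> u = u'].
have [m [[mAB mfun minj] mmax]] : exists m, P m /\ forall s, m `<` s -> ~ P s.
  apply: Zorn_bigcup => F FP Ftot; split.
  - by move=> p [r /FP [rAB _ _]]; apply: rAB.
  - move=> u v v' /(chain_bigcup2 Ftot) h /h [r /FP [_ rfun _] [ruv ruv']].
    exact: rfun ruv ruv'.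
  - move=> u u' v /(chain_bigcup2 Ftot) h /h [r /FP [_ _ rinj] [ruv ru'v]].
    exact: rinj ruv ru'v.
have [dom|/existsNP [u1 /not_implyP [Au1 nu1]]] :=
  pselect (forall u, A u -> exists v, m (u, v)).
  left; have [f fP] := choice_on v0 dom; exists f; split.
    by move=> u Au; have [] := mAB _ (fP u Au).
  by move=> u u' Au Au' e; apply: (minj u u' (f u)); last rewrite e; exact: fP.
have [ran|/existsNP [v1 /not_implyP [Bv1 nv1]]] :=
  pselect (forall v, B v -> exists u, m (u, v)).
  right; have [g gP] := choice_on u0 ran; exists g; split.
    by move=> v Bv; have [] := mAB _ (gP v Bv).
  by move=> v v' Bv Bv' e; apply: (mfun (g v)); last rewrite e; exact: gP.
exfalso; apply: (mmax (m `|` [set (u1, v1)])).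
  split; first exact: subsetUl.
  by move=> /(_ (u1, v1) (or_intror erefl)) m1; apply: nu1; exists v1.
split.
- by move=> p [/mAB //|->].
- move=> u v v' [h|[eu ev]] [h'|[eu' ev']]; subst => //; first exact: mfun h h'.
  1,2: by case: nu1; eexists; eassumption.
- move=> u u' v [h|[eu ev]] [h'|[eu' ev']]; subst => //; first exact: minj h h'.
  1,2: by case: nv1; eexists; eassumption.
Qed.

Lemma inj_le_setX U U' V V' (A : set U) (A' : set U') (B : set V) (B' : set V') :
  inj_le A A' -> inj_le B B' -> inj_le (A `*` B) (A' `*` B').
Proof.
move=> [f [fA fi]] [g [gB gi]]; exists (fun p => (f p.1, g p.2)); split.
  by move=> [u v] [/= Au Bv]; split; [exact: fA | exact: gB].
move=> [u v] [u' v'] [/= Au Bv] [/= Au' Bv'] [/fi e1 /gi e2].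
by rewrite (e1 Au Au') (e2 Bv Bv').
Qed.

Lemma inj_le_setU_setX U (A C : set U) (b0 b1 : U) : A b0 -> A b1 -> b0 <> b1 ->
  inj_le C A -> inj_le (A `|` C) (A `*` A).
Proof.
move=> Ab0 Ab1 b01 [j [jA ji]].
exists (fun u => if pselect (A u) is left _ then (u, b0) else (j u, b1)); split.
  by move=> u Du; case: pselect => Au; split => //; apply: jA; case: Du.
move=> u u' Du Du'; case: pselect => Au; case: pselect => Au' /pair_equal_spec [e e01] //.
all: by [case: b01 | case: b01; symmetry | apply: ji e; [case: Du | case: Du']].
Qed.

Section Pairing.
Variables (U : Type) (A : set U).

Definition pairing_dom (r : set ((U * U) * U)) : set U :=
  [set u | exists w, r ((u, u), w)].

(* [r] is the graph of an injection of [B `*` B] into [B], for [B = pairing_dom r]. *)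
Definition is_pairing (r : set ((U * U) * U)) : Prop :=
  [/\ forall p w, r (p, w) ->
        [/\ pairing_dom r p.1, pairing_dom r p.2 & pairing_dom r w],
      forall u v, pairing_dom r u -> pairing_dom r v -> exists w, r ((u, v), w),
      pairing_dom r `<=` A,
      forall p w w', r (p, w) -> r (p, w') -> w = w' &
      forall p p' w, r (p, w) -> r (p', w) -> p = p'].

Lemma pairing_domS r s : r `<=` s -> pairing_dom r `<=` pairing_dom s.
Proof. by move=> rs u [w ruw]; exists w; apply: rs. Qed.

Lemma is_pairing_bigcup (F : set (set ((U * U) * U))) :
  F `<=` is_pairing -> total_on F subset -> is_pairing (\bigcup_(r in F) r).
Proof.
move=> FP Ftot; set M := \bigcup_(r in F) r.
have domM r : F r -> pairing_dom r `<=` pairing_dom M.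
  by move=> Fr; apply: pairing_domS => q rq; exists r.
have Mdom u : pairing_dom M u -> exists2 r, F r & pairing_dom r u.
  by move=> [w [r Fr ruw]]; exists r => //; exists w.
split.
- move=> p w [r Fr rpw]; have [rdom _ _ _ _] := FP r Fr.
  by have [h1 h2 h3] := rdom _ _ rpw; split; apply: domM Fr _ _.
- move=> u v /Mdom [r Fr ru] /Mdom [s Fs sv].
  have [rs|sr] := Ftot _ _ Fr Fs.
    have [_ stot _ _ _] := FP s Fs.
    by have [w sw] := stot u v (pairing_domS rs ru) sv; exists w, s.
  have [_ rtot _ _ _] := FP r Fr.
  by have [w rw] := rtot u v ru (pairing_domS sr sv); exists w, r.
- by move=> u /Mdom [r /FP [_ _ rA _ _] /rA].
- move=> p w w' /(chain_bigcup2 Ftot) h /h [r /FP [_ _ _ rfun _] [rw rw']].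
  exact: rfun rw rw'.
- move=> p p' w /(chain_bigcup2 Ftot) h /h [r /FP [_ _ _ _ rinj] [rp rp']].
  exact: rinj rp rp'.
Qed.

Lemma pairing_inj_le (u0 : U) r :
  is_pairing r -> inj_le (pairing_dom r `*` pairing_dom r) (pairing_dom r).
Proof.
move=> [rdom rtot _ rfun rinj].
have [f fP] : exists f : U * U -> U,
    forall p, (pairing_dom r `*` pairing_dom r) p -> r (p, f p).
  by apply: (choice_on u0 (R := fun p w => r (p, w))) => -[u v] [Bu Bv]; exact: rtot.
exists f; split => [p Bp|p p' Bp Bp' e].
  by have [_ _] := rdom _ _ (fP _ Bp).
by apply: (rinj p p' (f p)); last rewrite e; apply: fP.
Qed.

Lemma is_pairing_range (io : nat -> U) :
  (forall n, A (io n)) -> injective io ->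
  exists2 r, is_pairing r & pairing_dom r = range io.
Proof.
move=> ioA ioI; have [pr [_ prI]] : inj_le [set: nat * nat] [set: nat].
  by apply: (card_le_inj_le 0%N); move: card_nat2; rewrite card_eq_le => /andP [].
pose r := [set ((io q.1, io q.2), io (pr q)) | q in [set: nat * nat]].
have domr : pairing_dom r = range io.
  apply/seteqP; split => [u [w [[m n] _ [<- _ _]]]|u [n _ <-]]; first by exists m.
  by exists (io (pr (n, n))), (n, n).
exists r => //; rewrite /is_pairing domr; split.
- by move=> p w [q _ [<- <-]]; split; [exists q.1 | exists q.2 | exists (pr q)].
- by move=> _ _ [m _ <-] [n _ <-]; exists (io (pr (m, n))), (m, n).
- by move=> _ [n _ <-].
- move=> p w w' [q _ [<- <-]] [q' _ [/ioI e1 /ioI e2 <-]].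
  by rewrite [q']surjective_pairing e1 e2 -surjective_pairing.
- move=> p p' w [q _ [<- <-]] [q' _ [<- /ioI /prI e]].
  by rewrite (e I I).
Qed.

Section Extension.
Variables (m : set ((U * U) * U)) (D : set U) (psi : U * U -> U).
Let B := pairing_dom m.
Let N := (D `*` D) `\` (B `*` B).
Hypotheses (mP : is_pairing m) (BD : B `<=` D) (DA : D `<=` A)
  (psiN : forall p, N p -> (D `\` B) (psi p))
  (psiI : forall p p', N p -> N p' -> psi p = psi p' -> p = p').

Definition pairing_ext := m `|` [set q | N q.1 /\ q.2 = psi q.1].

Lemma pairing_dom_ext : pairing_dom pairing_ext = D.
Proof.
have [mdom _ _ _ _] := mP.
apply/seteqP; split => [u [w [/mdom [Bu _ _]|[[[Du _] _] _]]]|u Du] //.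
  exact: BD.
have [[w muw]|nBu] := pselect (B u); first by exists w; left.
by exists (psi (u, u)); right; split => //; split => // [][].
Qed.

Lemma is_pairing_ext : is_pairing pairing_ext.
Proof.
have [mdom mtot mA mfun minj] := mP.
have mB p w : m (p, w) -> (B `*` B) p by move/mdom => [].
rewrite /is_pairing pairing_dom_ext; split.
- move=> p w [/mdom [h1 h2 h3]|[Np /= ->]]; first by split; apply: BD.
  by have [[D1 D2] _] := Np; split => //; case: (psiN Np).
- move=> u v Du Dv; have [[Bu Bv]|nB] := pselect (B u /\ B v).
    by have [w mw] := mtot u v Bu Bv; exists w; left.
  by exists (psi (u, v)); right.
- exact: DA.
- move=> p w w' [mp|[[_ nBp] /= ->]] [mp'|[[_ nBp'] /= ->]] //.
  + exact: mfun mp mp'.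
  + by case: nBp'; apply: mB mp.
  + by case: nBp; apply: mB mp'.
- move=> p p' w [mp|[Np /= ->]] [mp'|[Np' /= e]].
  + exact: minj mp mp'.
  + by have [_ _ Bw] := mdom _ _ mp; case: (psiN Np'); rewrite -e.
  + by have [_ _ Bw] := mdom _ _ mp'; case: (psiN Np).
  + exact: psiI.
Qed.

End Extension.

Lemma pairing_extend (u0 : U) m b0 b1 : is_pairing m ->
  pairing_dom m b0 -> pairing_dom m b1 -> b0 <> b1 ->
  inj_le (pairing_dom m) (A `\` pairing_dom m) -> exists2 m', is_pairing m' & m `<` m'.
Proof.
move=> mP Bb0 Bb1 b01 [h [hAB hI]]; set B := pairing_dom m.
have BBB := pairing_inj_le u0 mP.
pose D := B `|` h @` B.
have DB : inj_le D B.
  apply: inj_le_trans (inj_le_setU_setX Bb0 Bb1 b01 _) BBB.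
  exact: (card_le_inj_le u0 (card_image_le h B)).
have [psi [psiB psiI]] : inj_le (D `*` D) B := inj_le_trans (inj_le_setX DB DB) BBB.
have hBD u : B u -> (D `\` B) (h u).
  by move=> Bu; split; [right; exists u | case: (hAB u Bu)].
have BD : B `<=` D by move=> u Bu; left.
have DA : D `<=` A.
  by move=> u [|[v /hAB [] ? _ <-]] //; have [_ _ + _ _] := mP; apply.
have psiN p : ((D `*` D) `\` (B `*` B)) p -> (D `\` B) (h (psi p)).
  by move=> [Dp _]; apply/hBD/psiB.
have hpsiI p p' : ((D `*` D) `\` (B `*` B)) p -> ((D `*` D) `\` (B `*` B)) p' ->
    h (psi p) = h (psi p') -> p = p'.
  by move=> [Dp _] [Dp' _] /hI e; apply: psiI => //; apply: e; apply: psiB.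
exists (pairing_ext m D (h \o psi)); first exact: is_pairing_ext.
split; first exact: subsetUl.
move=> /pairing_domS; rewrite pairing_dom_ext // => DB'.
by have [_] := hAB b0 Bb0; apply; apply: DB'; right; exists b0.
Qed.

Lemma inj_le_setX_self (u0 : U) : inj_le [set: nat] A -> inj_le (A `*` A) A.
Proof.
move=> [io [ioA ioI]].
have [r0 r0P r0dom] := is_pairing_range (fun n => ioA n I) (fun m n => ioI m n I I).
have [m [mP r0m mmax]] :=
  Zorn_bigcup_above r0P (fun F _ FP Ftot _ => is_pairing_bigcup FP Ftot).
set B := pairing_dom m.
have Bio n : B (io n) by apply: pairing_domS r0m _ _; rewrite r0dom; exists n.
have b01 : io 0 <> io 1 by move/ioI => /(_ I I).
have BBB := pairing_inj_le u0 mP.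
have [BAB|ABB] := inj_le_total u0 u0 B (A `\` B).
  by have [m' m'P mm'] := pairing_extend u0 mP (Bio 0) (Bio 1) b01 BAB; case: (mmax m' mm').
have AB : inj_le A B.
  apply: inj_le_trans (inj_le_trans (inj_le_setU_setX (Bio 0) (Bio 1) b01 ABB) BBB).
  by apply: subset_inj_le => u Au; have [Bu|nBu] := pselect (B u); [left|right].
have [_ _ BA _ _] := mP.
exact: inj_le_trans (inj_le_setX AB AB) (inj_le_trans BBB (subset_inj_le BA)).
Qed.

End Pairing.

Lemma inj_le_bigcup I X W (i0 : I) (w0 : W) (D : set I) (Z : I -> set X) (Y : set W) :
  (forall i, D i -> inj_le (Z i) Y) -> inj_le (\bigcup_(i in D) Z i) (D `*` Y).
Proof.
move=> ZY; have [e eP] := choice_on (fun _ : X => w0) ZY.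
have [s sP] : exists s : X -> I, forall u, (\bigcup_(i in D) Z i) u -> D (s u) /\ Z (s u) u.
  by apply: (choice_on i0 (R := fun u i => D i /\ Z i u)) => u [i Di Ziu]; exists i.
exists (fun u => (s u, e (s u) u)); split.
  by move=> u /sP [Dsu Zsu]; split => //; have [+ _] := eP _ Dsu; apply.
move=> u u' /sP [Dsu Zsu] /sP [_ Zsu'] [su].
by rewrite -su in Zsu' *; have [_] := eP _ Dsu; apply.
Qed.

Lemma inj_le_seq (V : eqType) (v0 : V) (X : set V) :
  inj_le [set: nat] X -> inj_le [set s : seq V | [set` s] `<=` X] X.
Proof.
move=> hX; have [io [ioX _]] := hX; have XX := subset_inj_le (@subset_refl _ X).
have XXX := inj_le_setX_self v0 hX.
pose L n := [set s : seq V | size s = n /\ [set` s] `<=` X].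
have LX n : inj_le (L n) X.
  elim: n => [|n IHn].
    exists (fun=> io 0); split => [_ _|]; first exact: ioX.
    by move=> [|? ?] [|? ?] [] // _ _ [] // _ _.
  apply: inj_le_trans (inj_le_trans (inj_le_setX XX IHn) XXX).
  exists (fun s => (head v0 s, behead s)); split.
    move=> [|v s] [//= [sn] sX]; split; first by apply: sX; exact: mem_head.
    by split => // w ws; apply: sX; rewrite /= inE ws orbT.
  by move=> [|v s] [|v' s'] [] // _ _ [] // _ _ [-> ->].
have LXX := inj_le_bigcup 0%N v0 (D := [set: nat]) (fun n _ => LX n).
apply: inj_le_trans (inj_le_trans LXX (inj_le_trans (inj_le_setX hX XX) XXX)).
by apply: subset_inj_le => s sX; exists (size s).
Qed.

Lemma inj_le_finite_subsets V (v0 : V) (X : set V) :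
  inj_le [set: nat] X -> inj_le [set F | finite_set F /\ F `<=` X] X.
Proof.
move=> hX; apply: inj_le_trans (@inj_le_seq {classic V} v0 X hX).
have [enum enumP] : exists enum : set V -> seq {classic V},
    forall F, finite_set F /\ F `<=` X -> F = [set` enum F].
  apply: (@choice_on (set V) (seq {classic V}) [::]
    [set F | finite_set F /\ F `<=` X] (fun F s => F = [set` s])) => F [].
  by move=> /(@finite_seqP {classic V}).
exists enum; split => [F FX v vF|F F' FX FX' e].
  by have [_] := FX; apply; rewrite (enumP F FX).
by rewrite (enumP F FX) (enumP F' FX') e.
Qed.

Lemma disjoint_family_avoid I X W (x : I -> set X) (S : set I) (Us : set X)
    (Y : set W) (x0 : X) :
  (forall i j, i <> j -> x i `&` x j = set0) -> inj_le Us Y -> ~ (S #<= Y) ->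
  exists2 i, S i & x i `&` Us = set0.
Proof.
move=> xD UY nSY; apply: contra_notP nSY => nex.
have meets i : S i -> exists u, (x i `&` Us) u.
  move=> Si; apply: contra_notP nex => nu; exists i => //.
  by apply/seteqP; split => // u xu; apply: nu; exists u.
have [f fP] := choice_on x0 meets.
apply: inj_le_card_le; apply: inj_le_trans UY.
exists f; split => [i Si|i j Si Sj fij]; first by have [] := fP i Si.
have [//|ij] := pselect (i = j).
have [xi _] := fP i Si; have [xj _] := fP j Sj.
have : (x i `&` x j) (f i) by split => //; rewrite fij.
by rewrite xD.
Qed.

Definition bounded_size X n (A : set X) :=
  exists s : seq {classic X}, (size s <= n)%N /\ A `<=` [set` s].

Lemma finite_bounded_size X (A : set X) : finite_set A -> exists n, bounded_size n A.
Proof. by move=> /(@finite_seqP {classic X}) [s ->]; exists (size s), s; split. Qed.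

Lemma bounded_sizeD1 X n (A : set X) x :
  bounded_size n.+1 A -> A x -> bounded_size n (A `\ x).
Proof.
move=> [s [sn As]] Ax; exists (@rem {classic X} x s); split.
  by rewrite size_rem; [move: sn; case: (size s) | apply: As].
by move=> y [Ay yx]; apply: rem_mem; [apply/eqP | exact: As].
Qed.

Lemma subset_capf T (a : T -> set nat) (z z' : set T) :
  z' `<=` z -> capf a z `<=` capf a z'.
Proof. by move=> zz' w hw xi /zz'; apply: hw. Qed.

Lemma Qposet_setU T K (a b : T -> set nat) (x : T -> set T) (S : K -> set T)
    (F1 F2 Rs : set K) (z1 z2 : set T) (w : nat) (pi1 pi2 : K -> T) :
  Qposet a b x S F1 -> Qposet a b x S F2 -> capf a z1 w -> capf b z2 w ->
  (forall al, F1 al -> ~ Rs al -> S al (pi1 al) /\ x (pi1 al) `<=` z1) ->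
  (forall al, F2 al -> ~ Rs al -> S al (pi2 al) /\ x (pi2 al) `<=` z2) ->
  Rs `<=` F1 `&` F2 -> Qposet a b x S (F1 `|` F2).
Proof.
move=> [fin1 Q1] [fin2 Q2] wa wb h1 h2 RF.
have cross al be : F1 al -> F2 be -> al <> be -> exists i j, [/\ S al i, S be j &
    (capf a (x i) `&` capf b (x j) !=set0 \/ capf b (x i) `&` capf a (x j) !=set0)].
  move=> F1al F2be albe.
  have [/RF [F1al' F2al]|Ral] := pselect (Rs al); first exact: Q2.
  have [/RF [F1be _]|Rbe] := pselect (Rs be); first exact: Q1.
  have [S1 x1] := h1 al F1al Ral; have [S2 x2] := h2 be F2be Rbe.
  exists (pi1 al), (pi2 be); split => //; left; exists w.
  by split; [exact: subset_capf x1 _ wa | exact: subset_capf x2 _ wb].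
split; first by rewrite finite_setU.
move=> al be [F1al|F2al] [F1be|F2be] albe; [exact: Q1 | exact: cross | | exact: Q2].
have [i [j [Si Sj hij]]] := cross be al F1be F2al (nesym albe).
by exists j, i; split => //; case: hij => h; [right|left]; rewrite setIC.
Qed.

Lemma not_nice_separated T (a b : T -> set nat) : ~ nice a b ->
  exists2 x, disj_fin_family x & forall i j, capf a (x i) `&` capf b (x j) = set0.
Proof.
move=> /existsNP [x /not_implyP [dx nij]]; exists x => // i j.
by apply/seteqP; split => // w hw; apply: nij; exists i, j, w.
Qed.

Lemma singleton_antichain T K (a b : T -> set nat) (x : T -> set T) (S : K -> set T) :
  (forall i j, capf a (x i) `&` capf b (x j) = set0) ->
  prod_antichain (Qposet a b x S) (Qposet a b x S) [set ([set al], set0) | al in [set: K]].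
Proof.
move=> sep; have Q0 : Qposet a b x S set0 by split; [exact: finite_set0 | move=> ? ? []].
split => [_ [al _ <-]|_ _ [al _ <-] [be _ <-] ne [r [[[_ Qr] _] [[le1 _] [le2 _]]]]].
  by split => //; split => [|? ? -> ->]; [exact: finite_set1 | case].
have [i [j [_ _ [[w hw]|[w hw]]]]] := Qr al be (le1 al erefl) (le2 be erefl)
  (fun e => ne (congr1 (fun k => ([set k], set0)) e)).
  by move: hw; rewrite sep.
by move: hw; rewrite setIC sep.
Qed.

Section WellOrder.
Variables (X : Type) (lt : X -> X -> Prop).
Hypothesis wo : well_order lt.

Lemma wo_irr x : ~ lt x x. Proof. by case: wo. Qed.

Lemma wo_trans x y z : lt x y -> lt y z -> lt x z.
Proof. by case: wo => _ + _ _; apply. Qed.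

Lemma wo_total x y : lt x y \/ x = y \/ lt y x. Proof. by case: wo. Qed.

Lemma wo_lt_nlt_trans x y z : lt x y -> ~ lt z y -> lt x z.
Proof.
move=> xy nzy; have [zy|[zy|yz]] := wo_total z y => //; first by rewrite zy.
exact: wo_trans xy yz.
Qed.

Lemma wo_nlt_trans x y z : ~ lt x y -> ~ lt y z -> ~ lt x z.
Proof.
move=> nxy nyz xz; apply: nyz.
have [yx|[yx|xy]] := wo_total y x; [exact: wo_trans yx xz | by rewrite yx | by []].
Qed.

Lemma wo_upper x y : exists z, ~ lt z x /\ ~ lt z y.
Proof.
have [xy|[xy|yx]] := wo_total x y.
- by exists y; split; [move/(wo_trans xy); exact: wo_irr | exact: wo_irr].
- by exists x; rewrite -xy; split; exact: wo_irr.
- by exists x; split; [exact: wo_irr | move/(wo_trans yx); exact: wo_irr].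
Qed.

Lemma wo_least (x : X) : exists x0, forall y, ~ lt y x0.
Proof.
have [|nmin] := pselect (exists x0, forall y, ~ lt y x0) => //.
have below y : exists z, lt z y.
  by apply: contra_notP nmin => nz; exists y => z zy; apply: nz; exists z.
case: wo => _ _ _ /(_ x); elim=> y _ IH.
by have [z zy] := below y; exact: IH zy.
Qed.

End WellOrder.

Section StandingAssumptions.
Variables (T : Type) (ltT : T -> T -> Prop) (K : Type) (ltK : K -> K -> Prop)
  (th : K -> T).
Hypotheses (woT : well_order ltT) (woK : well_order ltK)
  (kappa_cardinal : is_cardinal ltK) (cofK : cofinality_is ltT K)
  (K_uncountable : ~ countable [set: K])
  (th_mono : forall a b, ltK a b -> ltT (th a) (th b))
  (th_unbounded : forall t, exists a, ltT t (th a))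
  (th_least_gt : forall k0, (forall k, ~ ltK k k0) ->
     card_lt [set: K] (seg ltT (th k0))).

Lemma lt_th_nlt a b t : ~ ltK b a -> ltT t (th a) -> ltT t (th b).
Proof.
move=> nba ta; have [ba|[ab|ab]] := wo_total woK b a => //; first by rewrite ab.
exact: (wo_trans woT ta (th_mono ab)).
Qed.

Lemma small_bounded (W : set K) : ~ ([set: K] #<= W) -> exists c, forall w, W w -> ltK w c.
Proof.
move=> nKW; apply: contra_notP nKW => nbd.
have cfW : cofinal ltT (th @` W).
  move=> t; have [a ta] := th_unbounded t.
  have [w [Ww nwa]] : exists w, W w /\ ~ ltK w a.
    by apply: contra_notP nbd => nw; exists a => w Ww; apply: contra_notP nw; exists w.
  by exists (th w); [exists w | left; exact: lt_th_nlt nwa ta].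
exact: card_le_trans (cofK.2 _ cfW) (card_image_le _ _).
Qed.

Lemma countable_bounded (f : nat -> K) : exists c, forall n, ltK (f n) c.
Proof.
have [|c hc] := @small_bounded (range f); last by exists c => n; apply: hc; exists n.
by move=> /card_le_trans /(_ (card_image_le f setT)).
Qed.

Lemma seg_image_bounded (b : K) (f : K * bool -> K) :
  exists d, forall l, ltK l.1 b -> ltK (f l) d.
Proof.
have bound (t : bool) : exists d, forall beta, ltK beta b -> ltK (f (beta, t)) d.
  have [|d hd] := @small_bounded ((fun beta => f (beta, t)) @` seg ltK b).
    move=> /card_le_trans /(_ (card_image_le _ _)); exact: (kappa_cardinal b).2.
  by exists d => beta bb; apply: hd; exists beta.
have [[d1 h1] [d2 h2]] := (bound true, bound false).
have [d [d1d d2d]] := wo_upper woK d1 d2.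
by exists d => -[beta []] /= bb; [apply: wo_lt_nlt_trans (h1 _ bb) d1d
  | apply: wo_lt_nlt_trans (h2 _ bb) d2d].
Qed.

Lemma K_inhabited : inhabited K.
Proof.
apply: contra_notP K_uncountable => nK.
rewrite (_ : [set: K] = set0); first exact: countable0.
by apply/seteqP; split => // k; case: nK; constructor.
Qed.

Lemma nat_inj_le_K : inj_le [set: nat] [set: K].
Proof.
have [k] := K_inhabited; apply: (card_le_inj_le k).
by apply/infiniteP => /finite_set_countable.
Qed.

Lemma nat_inj_le_seg_th a : inj_le [set: nat] (seg ltT (th a)).
Proof.
have [k0 k0min] := wo_least woK a.
have Kth0 := card_le_inj_le (th a) (th_least_gt k0min).1.
apply: inj_le_trans nat_inj_le_K (inj_le_trans Kth0 _).
by apply: subset_inj_le => t /lt_th_nlt; apply; apply: k0min.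
Qed.

Lemma seg_setX_nat_inj_le_seg_th t a :
  ltT t (th a) -> inj_le (seg ltT t `*` [set: nat]) (seg ltT (th a)).
Proof.
move=> ta; have hX := nat_inj_le_seg_th a.
apply: (inj_le_trans _ (inj_le_setX_self t hX)); apply: (inj_le_setX _ hX).
by apply: subset_inj_le => s st; exact: (wo_trans woT st ta).
Qed.

Definition below (m : K) : set (K * bool) := [set l | ltK l.1 m].

Definition unbounded_family I (P : set I) (st : I -> set (K * bool)) :=
  forall c, exists2 p, P p & exists2 l, st p l & ~ ltK l.1 c.

(* A weak form of a Delta-system root. *)
Definition is_root I (P : set I) (st : I -> set (K * bool)) (R : set (K * bool)) :=
  forall c, exists2 p, P p &
    exists m, [/\ ~ ltK m c, st p `&` below m = R & ~ (st p `<=` below m)].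

Lemma unbounded_split I (P : set I) st b : unbounded_family P st ->
    (forall p, P p -> st p !=set0 -> exists2 l, st p l & ltK l.1 b) ->
  exists2 l, ltK l.1 b & unbounded_family [set p | P p /\ st p l] (fun p => st p `\ l).
Proof.
move=> unb lowb; apply: contrapT => nsplit.
have bnd l : ltK l.1 b -> exists c,
    forall p, P p -> st p l -> forall x, st p x -> x <> l -> ltK x.1 c.
  move=> lb; apply: contra_notP nsplit => nc; exists l => // c.
  apply: contra_notP nc => np; exists c => p Pp stl z stz zl.
  by apply: contra_notP np => nzc; exists p => //; exists z.
have [cb cbP] := choice_on b bnd.
have [d dP] := seg_image_bounded b cb.
have [e [de be]] := wo_upper woK d b.
have [p Pp [l' stl' nl'e]] := unb e.
have [l0 stl0 l0b] := lowb p Pp (ex_intro _ l' stl').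
have l'l0 : l' <> l0.
  by move=> e'; apply: nl'e; rewrite e'; exact: (wo_lt_nlt_trans woK l0b be).
apply: nl'e; apply: (wo_lt_nlt_trans woK _ de).
exact: (wo_trans woK (cbP _ l0b p Pp stl0 l' stl' l'l0) (dP _ l0b)).
Qed.

Lemma bounded_size_root n I (P : set I) st :
  (forall p, P p -> bounded_size n (st p)) -> unbounded_family P st ->
  exists R, is_root P st R.
Proof.
have [k] := K_inhabited.
elim: n I P st => [|n IH] I P st sz unb.
  have [p Pp [l stl _]] := unb k; have [[|? ?] [//= _ sub]] := sz p Pp.
  by have := sub l stl.
have [high|/existsNP [b nhigh]] :=
  pselect (forall c, exists2 p, P p & st p !=set0 /\ st p `&` below c = set0).
  exists set0 => c; have [p Pp [[l stl] hi]] := high c.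
  exists p => //; exists c; split => //; first exact: wo_irr.
  by move=> /(_ l stl) lc; have : (st p `&` below c) l by []; rewrite hi.
have lowb p : P p -> st p !=set0 -> exists2 l, st p l & ltK l.1 b.
  move=> Pp ne; apply: contra_notP nhigh => nl; exists p => //; split => //.
  by apply/seteqP; split => // l [stl lb]; apply: nl; exists l.
have [l lb unbl] := unbounded_split unb lowb.
have [R' HR'] := IH _ _ _ (fun p '(conj Pp stl) => bounded_sizeD1 (sz p Pp) stl) unbl.
exists (R' `|` [set l]) => c.
have [d [dc db]] := wo_upper woK c b.
have [p [Pp stl] [m [md e nsub]]] := HR' d.
have lm : ltK l.1 m := wo_lt_nlt_trans woK (wo_lt_nlt_trans woK lb db) md.
exists p => //; exists m; split; first exact: (wo_nlt_trans woK md dc).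
  rewrite -e; apply/seteqP; split => [x [stx xm]|x [[[stx _] xm]|->]].
  - by have [->|xl] := pselect (x = l); [right | left].
  - by split.
  - by split.
by move=> sub; apply: nsub => x [/sub].
Qed.

Lemma unbounded_family_root I (P : set I) st :
  (forall p, P p -> finite_set (st p)) -> unbounded_family P st ->
  exists R, is_root P st R.
Proof.
move=> fin unb.
suff [n unbn] : exists n, unbounded_family [set p | P p /\ bounded_size n (st p)] st.
  have [R HR] := bounded_size_root (fun p (h : P p /\ _) => h.2) unbn.
  by exists R => c; have [p [Pp _] h] := HR c; exists p.
apply: contrapT => nn.
have bnd n : exists c,
    forall p, P p -> bounded_size n (st p) -> forall l, st p l -> ltK l.1 c.
  apply: contra_notP nn => nc; exists n => c.
  apply: contra_notP nc => np; exists c => p Pp sz l stl.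
  by apply: contra_notP np => nlc; exists p => //; exists l.
have [cn cnP] := choice bnd.
have [d dP] := countable_bounded cn.
have [p Pp [l stl nld]] := unb d.
have [n szn] := finite_bounded_size (fin p Pp).
exact: nld (wo_trans woK (cnP n p Pp szn l stl) (dP n)).
Qed.

Section Forward.
Variables (a b : T -> set nat) (x y : T -> set T) (S U : K -> set T)
  (Ac : set (set K * set K)).
Hypotheses (a_b_nice : nice a b) (dx : disj_fin_family x) (dy : disj_fin_family y)
  (XS : X_sequence ltT th a b x S) (YU : X_sequence ltT th a b y U)
  (Ac_antichain : prod_antichain (Qposet a b x S) (Qposet a b y U) Ac)
  (K_inj_le_Ac : inj_le [set: K] Ac).

(* A pair of conditions is coded by one finite subset of [K * bool], the tag
   recording the coordinate. *)
Definition tagged (p : set K * set K) : set (K * bool) :=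
  [set l | if l.2 then p.1 l.1 else p.2 l.1].

Definition seq_at (l : K * bool) : set T := if l.2 then S l.1 else U l.1.

Definition piece (l : K * bool) (i : T) : set T := if l.2 then x i else y i.

Lemma tagged_finite p : Ac p -> finite_set (tagged p).
Proof.
move=> /(proj1 Ac_antichain) [[fin1 _] [fin2 _]].
apply: (@sub_finite_set _ _ ((fun k => (k, true)) @` p.1 `|` (fun k => (k, false)) @` p.2)).
  by move=> [k []] /= h; [left|right]; exists k.
by rewrite finite_setU; split; exact: finite_image.
Qed.

Lemma antichain_unbounded : unbounded_family Ac tagged.
Proof.
(* Otherwise [Ac] injects into the pairs of finite subsets of some [c' < kappa]. *)
move=> c; apply: contrapT => nunb.
have low p l : Ac p -> tagged p l -> ltK l.1 c.
  by move=> Acp tl; apply: contrapT => nlc; apply: nunb; exists p => //; exists l.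
have [io [_ ioI]] := nat_inj_le_K.
have [c2 c2P] := countable_bounded io.
have [c' [c'c c'c2]] := wo_upper woK c c2.
have nat_c' : inj_le [set: nat] (seg ltK c').
  exists io; split => [n _|m n _ _ /ioI]; last by apply.
  exact: (wo_lt_nlt_trans woK (c2P n) c'c2).
have [k] := K_inhabited; have fin := inj_le_finite_subsets k nat_c'.
apply: (kappa_cardinal c').2; apply: inj_le_card_le.
apply: (inj_le_trans K_inj_le_Ac); apply: (inj_le_trans _ (inj_le_setX_self k nat_c')).
apply: (inj_le_trans _ (inj_le_setX fin fin)); apply: subset_inj_le => p Acp.
have [[fin1 _] [fin2 _]] := proj1 Ac_antichain p Acp.
split; split => // k' h; apply: (wo_lt_nlt_trans woK _ c'c).
  exact: (low p (k', true) Acp h).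
exact: (low p (k', false) Acp h).
Qed.

Variable R : set (K * bool).
Hypothesis R_root : is_root Ac tagged R.

Definition core (p : set K * set K) (pi : K * bool -> T) : set T :=
  \bigcup_(l in tagged p `\` R) piece l (pi l).

(* [z] may serve as the [t]-th member of the disjoint family: the part above
   the root of a condition whose coordinates there all exceed [t], realised by
   pieces avoiding the earlier members [Us]. *)
Definition good (t : T) (Us z : set T) : Prop :=
  exists p m pi, z = core p pi /\
    [/\ Ac p, ltT t (th m), tagged p `&` below m = R, tagged p `\` R !=set0 &
        forall l, (tagged p `\` R) l -> seq_at l (pi l) /\ piece l (pi l) `&` Us = set0].

Lemma good_finite t Us z : good t Us z -> finite_set z.
Proof.
move=> [p [m [pi [-> [Acp _ _ _ _]]]]].
apply: bigcup_finite => [|l _]; first exact: sub_finite_set (tagged_finite Acp).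
by rewrite /piece; case: l.2; [exact: dx.1 | exact: dy.1].
Qed.

Lemma good_disjoint t Us z : good t Us z -> z `&` Us = set0.
Proof.
move=> [p [m [pi [-> [_ _ _ _ piP]]]]]; apply/seteqP; split => // u [[l hl pu] Uu].
by have [_ <-] := piP l hl; split.
Qed.

Lemma good_exists t Us : inj_le Us (seg ltT t `*` [set: nat]) -> exists z, good t Us z.
Proof.
move=> UsX; have [c tc] := th_unbounded t.
have [p Acp [m [mc e nsub]]] := R_root c.
have tm := lt_th_nlt mc tc.
have high l : (tagged p `\` R) l -> ~ ltK l.1 m.
  by move=> [tl nRl] lm; apply: nRl; rewrite -e.
have pick l : (tagged p `\` R) l -> exists i, seq_at l i /\ piece l i `&` Us = set0.
  move=> /high lm.
  have hU := inj_le_trans UsX (seg_setX_nat_inj_le_seg_th (lt_th_nlt lm tm)).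
  rewrite /seq_at /piece; case: l.2.
    have [_ XS2 _] := XS.
    by have [i] := disjoint_family_avoid t dx.2 hU (XS2 l.1).2; exists i.
  have [_ YU2 _] := YU.
  by have [i] := disjoint_family_avoid t dy.2 hU (YU2 l.1).2; exists i.
have [pi piP] := choice_on t pick.
exists (core p pi), p, m, pi; split => //; split => //.
apply: contrapT => empty; apply: nsub => l tl; apply: contrapT => nlm.
by apply: empty; exists l; split => //; rewrite -e => -[].
Qed.

Lemma good_family : exists Z : T -> set T,
  forall t, good t (\bigcup_(s in seg ltT t) Z s) (Z t).
Proof.
have [G GP] : {G : T * set T -> set T &
    forall q, (exists z, good q.1 q.2 z) -> good q.1 q.2 (G q)}.
  apply: (@choice _ _ (fun q z' => (exists z, good q.1 q.2 z) -> good q.1 q.2 z')) => q.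
  have [[z gz]|ng] := pselect (exists z, good q.1 q.2 z).
    by exists z.
  by exists set0.
have [_ _ _ wfT] := woT.
pose step t (prev : forall s, ltT s t -> set T) :=
  G (t, [set u | exists s (st : ltT s t), prev s st u]).
pose Z := Fix wfT (fun _ => set T) step.
have ZE t : Z t = G (t, \bigcup_(s in seg ltT t) Z s).
  rewrite /Z Fix_eq /step; last first.
    move=> t' f g fg; congr (G (_, _)); apply/seteqP.
    by split => u [s [st]]; [rewrite fg | rewrite -fg] => ?; exists s, st.
  congr (G (_, _)); apply/seteqP.
  by split => [u [s [st Zsu]]|u [s st Zsu]]; [exists s | exists s, st].
exists Z => t; elim/(well_founded_ind wfT): t => t IH.
rewrite ZE; apply: GP; apply: good_exists.
apply: (inj_le_bigcup t 0%N) => s st.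
exact: (card_le_inj_le 0%N (finite_set_countable (good_finite (IH s st)))).
Qed.

Lemma seq_at_separated l i j : seq_at l i -> seq_at l j ->
  capf a (piece l i) `&` capf b (piece l j) = set0.
Proof.
by rewrite /seq_at /piece; case: l.2; [case: XS | case: YU] => _ _ sep; apply: sep.
Qed.

Lemma good_meet_false t1 t2 Us1 Us2 z1 z2 w :
  good t1 Us1 z1 -> good t2 Us2 z2 -> capf a z1 w -> capf b z2 w -> False.
Proof.
move=> [p1 [m1 [pi1 [Z1 [Ac1 _ e1 [l1 hl1] pi1P]]]]] [p2 [m2 [pi2 [Z2 [Ac2 _ e2 _ pi2P]]]]].
move=> wa wb.
have sub1 l : (tagged p1 `\` R) l -> piece l (pi1 l) `<=` z1.
  by rewrite Z1 => hl u pu; exists l.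
have sub2 l : (tagged p2 `\` R) l -> piece l (pi2 l) `<=` z2.
  by rewrite Z2 => hl u pu; exists l.
have [e12|n12] := pselect (p1 = p2).
  (* both points chosen for [l1] lie in one member of an X-sequence *)
  subst p2; have [S1 _] := pi1P l1 hl1; have [S2 _] := pi2P l1 hl1.
  have : (capf a (piece l1 (pi1 l1)) `&` capf b (piece l1 (pi2 l1))) w.
    by split; [exact: subset_capf (sub1 _ hl1) _ wa | exact: subset_capf (sub2 _ hl1) _ wb].
  by rewrite seq_at_separated.
have [Qx1 Qy1] := proj1 Ac_antichain p1 Ac1; have [Qx2 Qy2] := proj1 Ac_antichain p2 Ac2.
have merge (tg : bool) : Qposet a b (if tg then x else y) (if tg then S else U)
    [set k | tagged p1 (k, tg) \/ tagged p2 (k, tg)].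
  apply: (Qposet_setU (Rs := [set k | R (k, tg)]) (pi1 := fun k => pi1 (k, tg))
    (pi2 := fun k => pi2 (k, tg)) _ _ wa wb).
  - by case: tg.
  - by case: tg.
  - move=> k tk nR; have [S1 _] := pi1P (k, tg) (conj tk nR).
    by move: S1 (sub1 _ (conj tk nR)); case: tg {tk nR}.
  - move=> k tk nR; have [S2 _] := pi2P (k, tg) (conj tk nR).
    by move: S2 (sub2 _ (conj tk nR)); case: tg {tk nR}.
  - by move=> k Rk; split; [rewrite -e1 in Rk | rewrite -e2 in Rk]; case: Rk.
apply: (proj2 Ac_antichain p1 p2 Ac1 Ac2 n12).
exists (p1.1 `|` p2.1, p1.2 `|` p2.2).
split; first by split; [exact: (merge true) | exact: (merge false)].
by split; split => k h; [left | left | right | right].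
Qed.

Lemma antichain_no_root : False.
Proof.
have [Z ZP] := good_family.
have Zlt s t : ltT s t -> Z s `&` Z t = set0.
  move=> st; apply/seteqP; split => // u [Zsu Ztu].
  by rewrite -(good_disjoint (ZP t)); split => //; exists s.
have dZ : disj_fin_family Z.
  split => [t|s t st]; first exact: good_finite (ZP t).
  have [lt_st|[//|lt_ts]] := wo_total woT s t; first exact: Zlt.
  by rewrite setIC; exact: Zlt.
have [i [j [w [wa wb]]]] := a_b_nice dZ.
exact: (good_meet_false (ZP i) (ZP j) wa wb).
Qed.

End Forward.

Lemma nice_prod_kappa_cc a b : nice a b ->
  forall (x y : T -> set T) (S U : K -> set T),
    disj_fin_family x -> disj_fin_family y ->
    X_sequence ltT th a b x S -> X_sequence ltT th a b y U ->
    prod_kappa_cc (Qposet a b x S) (Qposet a b y U).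
Proof.
move=> hnice x y S U dx dy XS YU Ac hAc; apply: contrapT => nlt.
have [k] := K_inhabited.
have KAc : inj_le [set: K] Ac.
  have [//|AcK] := inj_le_total k (set0, set0) [set: K] Ac.
  apply: (card_le_inj_le (set0, set0)); apply: contrapT => nKAc.
  by apply: nlt; split => //; exact: inj_le_card_le.
have [R HR] := unbounded_family_root (tagged_finite hAc) (antichain_unbounded hAc KAc).
exact: (antichain_no_root hnice dx dy XS YU hAc HR).
Qed.

Hypotheses (theta_cardinal : is_cardinal ltT) (K_lt_T : card_lt [set: K] [set: T]).

Lemma exists_X_sequence (a b : T -> set nat) (x : T -> set T) :
  (forall i j, capf a (x i) `&` capf b (x j) = set0) ->
  exists S, X_sequence ltT th a b x S.
Proof.
move=> sep; have [k] := K_inhabited.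
have [psi [_ psiI]] := card_le_inj_le (th k) K_lt_T.1.
have natT : inj_le [set: nat] [set: T].
  by apply: (inj_le_trans nat_inj_le_K); exists psi.
have [pr [_ prI']] := inj_le_setX_self (th k) natT.
have prI p q : pr p = pr q -> p = q by move=> /prI'; apply.
(* [S al] is the [psi al]-th column of [T] under a pairing [T * T -> T]. *)
pose S al := [set pr (psi al, t) | t in [set: T]].
have TS al : [set: T] #<= S al.
  apply: inj_le_card_le; exists (fun t => pr (psi al, t)).
  by split => [t _|t t' _ _ /prI [] //]; exists t.
exists S; split => [al be albe|al|al i j _ _]; last exact: sep.
  apply/seteqP; split => // _ [[t _ <-] [t' _ /prI [/psiI e _]]].
  by apply: albe; rewrite e.
split; first exact: card_le_trans (card_leT _) (TS al).
by move=> /(card_le_trans (TS al)); exact: (theta_cardinal (th al)).2.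
Qed.

Lemma prod_kappa_cc_nice a b :
  (forall (x y : T -> set T) (S U : K -> set T),
    disj_fin_family x -> disj_fin_family y ->
    X_sequence ltT th a b x S -> X_sequence ltT th a b y U ->
    prod_kappa_cc (Qposet a b x S) (Qposet a b y U)) ->
  nice a b.
Proof.
move=> cc; apply: contrapT => /not_nice_separated [x dx sep].
have [S XS] := exists_X_sequence sep.
have [_] := cc x x S S dx dx XS XS _ (singleton_antichain S sep); apply.
apply: inj_le_card_le; exists (fun al => ([set al], set0)); split => [al _|al be _ _ [e]].
  by exists al.
by have : [set be] al by rewrite -e.
Qed.

End StandingAssumptions.

Theorem lemma1 (T : Type) (ltT : T -> T -> Prop) (K : Type)
    (ltK : K -> K -> Prop) (th : K -> T)
    (hstd : standing_assumptions ltT ltK th)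
    (a b : T -> set nat) (hpair : theta_pair a b) :
  nice a b <->
  (forall (x y : T -> set T) (S U : K -> set T),
      disj_fin_family x -> disj_fin_family y ->
      X_sequence ltT th a b x S -> X_sequence ltT th a b y U ->
      prod_kappa_cc (Qposet a b x S) (Qposet a b y U)).
Proof.
have [woT [thetaT [woK [kappaK [cofK [KT [Kunc [_ [thmono [thunb th0]]]]]]]]]] := hstd.
split; first exact: (nice_prod_kappa_cc woT woK kappaK cofK Kunc thmono thunb th0).
exact: (prod_kappa_cc_nice Kunc thetaT KT).
Qed.
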